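(* Let $g$ be the contravariant metric associated with an admissible data set and, for each vertex $\alpha$, let $K^\alpha(t_\alpha)$ be the family of Killing tensors defined by $K^\alpha(t_\alpha)(\xi,\eta)=g(S^\alpha(t_\alpha)\xi,\eta)$ with $S^\alpha(t_\alpha)$ as below; it is a polynomial of degree $n_\alpha-1$ in $t_\alpha$. For $j=1,\dots,n_\alpha$ let $I^\alpha_j$ be the quadratic function on $T^*M$ given by $p\mapsto (K^\alpha_j)^{ab}p_ap_b$, where $K^\alpha_j$ is the coefficient of $t_\alpha^{\,n_\alpha-j}$ in $K^\alpha(t_\alpha)$ and indices are raised with $g$. Order the $n$ integrals as $I=(I^1_1,\dots,I^1_{n_1},I^2_1,\dots,I^2_{n_2},\dots,I^B_{n_B})^\top$ and the momenta as $P=(p_{x_1^1}^2,\dots,p_{x_1^{n_1}}^2,\dots,p_{x_B^{n_B}}^2)^\top$. Let $S$ be the $n\times n$ matrix whose rows are indexed by the coordinates $x_\beta^i$ and whose columns are indexed by the integrals $I^\alpha_j$, with entries - $S_{(\alpha,i),(\alpha,j)}=\dfrac{(x_\alpha^i)^{n_\alpha-j}}{P_\alpha(x_\alpha^i)}$; - if $\beta=\operatorname{next}(\alpha)$: $S_{(\beta,i),(\alpha,1)}=\dfrac{1}{P_\beta(x_\beta^i)\,(x_\beta^i-\lambda_\alpha)}$ and $S_{(\beta,i),(\alpha,j)}=0$ for $j\ge2$; - $S_{(\beta,i),(\alpha,j)}=0$ whenever $\beta\ne\alpha$ and $\beta\neq\operatorname{next}(\alpha)$. Then $S\,I=P$ (so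 $S$ is a Stäckel matrix: its row indexed by $x_\beta^i$ depends only on $x_\beta^i$). Here $S^\alpha(t_\alpha)$ is block-diagonal w.r.t. $(X_1,\dots,X_B)$ with $\alpha$-block $f_\alpha^{-1}(t_\alpha\operatorname{Id}-L_\alpha)^{-1}\det(t_\alpha\operatorname{Id}-L_\alpha)$, with $\beta$-block $\Phi^{\alpha\beta}(t_\alpha)\operatorname{Id}_{n_\beta}$ for $\alpha\prec\beta$, where $\Phi^{\alpha\beta}(t_\alpha)=\frac{1}{f_\alpha(t_\alpha-\lambda_\gamma)}\bigl(\det(t_\alpha\operatorname{Id}-L_\alpha)-\det(\lambda_\gamma\operatorname{Id}-L_\alpha)\bigr)$ with $\gamma$ the vertex preceding $\alpha$ on the oriented path from $\beta$ to $\alpha$, and all other blocks zero.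
   Context: Admissible data. Fix $n\ge1$. An admissible data set consists of: a natural number $B\le n$; natural numbers $n_1,\dots,n_B$ with $n_1+\dots+n_B=n$; an in-directed rooted forest $\mathsf F$ with vertex set $\{1,\dots,B\}$, i.e. a directed graph each of whose connected components is a rooted tree with all edges oriented towards its root (so every vertex has a unique oriented path to a root); for an edge from $\beta$ to $\alpha$ we write $\alpha=\operatorname{next}(\beta)$, and for $\alpha\neq\beta$ we write $\alpha\prec\beta$ if there is an oriented path from $\beta$ to $\alpha$; every non-root vertex $\beta$ (equivalently, every edge $\beta\to\operatorname{next}(\beta)$) carries a number $\lambda_\beta$; every vertex $\alpha$ carries a polynomial $P_\alpha(t)=a^\alpha_0+a^\alpha_1t+\dots+a^\alpha_{n_\alpha+1}t^{n_\alpha+1}$ of degree at most $n_\alpha+1$. These are required to satisfy: (i) if $\mathsf F$ has more than one connected component, then $a^\alpha_{n_\alpha+1}=0$ for every root $\alpha$; (ii) if $\alpha=\operatorname{next}(\beta)$, then $P_\alpha(\lambda_\beta)=0$ and $a^\beta_{n_\beta+1}=P_\alpha'(\lambda_\beta)$; (iii) if $\beta\neq\gamma$ satisfy $\operatorname{next}(\beta)=\operatorname{next}(\gamma)=\alpha$ and $\lambda_\beta=\lambda_\gamma=\lambda$, then $\lambda$ is a root of $P_\alpha$ of multiplicity at least $2$. Associated metric. Divide the coordinates $(x^1,\dots,x^n)$ into consecutive blocks $X_\alpha=(x_\alpha^1,\dots,x_\alpha^{n_\alpha})$, $\alpha=1,\dots,B$. Let $L_\alpha=\operatorname{diag}(x_\alpha^1,\dots,x_\alpha^{n_\alpha})$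 (an $n_\alpha\times n_\alpha$ operator), let $g^{\mathsf{LC}}_\alpha=\sum_{s=1}^{n_\alpha}\bigl(\prod_{j\neq s}(x_\alpha^s-x_\alpha^j)\bigr)^{-1}\bigl(\partial/\partial x_\alpha^s\bigr)^2$ (a contravariant metric on the block), and let $f_\alpha=\prod_{s}\det\bigl(\lambda_s\operatorname{Id}-L_{\operatorname{next}(s)}\bigr)^{-1}$, the product over all non-root vertices $s$ with $s\prec\alpha$ or $s=\alpha$ (so $f_\alpha=1$ if $\alpha$ is a root). The associated contravariant metric is the diagonal metric $g=\operatorname{diag}(g_1,\dots,g_B)$ with $g_\alpha=f_\alpha\,P_\alpha(L_\alpha)\,g^{\mathsf{LC}}_\alpha$, i.e. $g^{ii}$ for the coordinate $x_\alpha^s$ equals $f_\alpha P_\alpha(x_\alpha^s)/\prod_{j\ne s}(x_\alpha^s-x_\alpha^j)$. It is considered on an open set where all these quantities are defined and nonzero. Coordinates are allowed to be real or to come in complex-conjugate pairs. *)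

From HB Require Import structures.
From mathcomp Require Import all_boot all_order all_algebra.
Set Implicit Arguments. Unset Strict Implicit. Unset Printing Implicit Defensive.
Import Order.TTheory GRing.Theory Num.Theory.
Local Open Scope ring_scope.

(* The forest is encoded by [next : 'I_B -> option 'I_B]
   (None = root).  Coordinates x_alpha^s are indexed by the finite type
   [coordT nA] of pairs (alpha, s) with s : 'I_(nA alpha) (0-based, s <-> s+1). *)

Definition coordT (B : nat) (nA : 'I_B -> nat) := {a : 'I_B & 'I_(nA a)}.

Definition cd (B : nat) (nA : 'I_B -> nat) (a : 'I_B) (k : 'I_(nA a))
  : coordT nA := Tagged (fun b => 'I_(nA b)) k.

Fixpoint nextk (B : nat) (next : 'I_B -> option 'I_B) (k : nat) (b : 'I_B)
  : option 'I_B :=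
  match k with 0 => Some b | k'.+1 => obind next (nextk next k' b) end.

Definition is_forest (B : nat) (next : 'I_B -> option 'I_B) : Prop :=
  forall b : 'I_B, exists k, nextk next k b = None.

(* a \prec b : there is an oriented path (of positive length) from b to a.
   In a forest such a path has length <= B, hence the bounded quantifier. *)
Definition prec (B : nat) (next : 'I_B -> option 'I_B) (a b : 'I_B) : bool :=
  [exists k : 'I_B, nextk next k.+1 b == Some a].

Section Metric.
Variables (R : numFieldType) (B : nat) (nA : 'I_B -> nat)
  (next : 'I_B -> option 'I_B) (lam : 'I_B -> R) (P : 'I_B -> {poly R})
  (x : coordT nA -> R).

(* characteristic polynomial det(t Id - L_g) of the block g *)
Definition detL (g : 'I_B) : {poly R} :=
  \prod_(k < nA g) ('X - (x (cd k))%:P).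

(* det(lambda_s Id - L_next(s)) for a non-root s (1 for roots, unused) *)
Definition detval (s : 'I_B) : R :=
  match next s with Some a => (detL a).[lam s] | None => 1 end.

Definition fA (a : 'I_B) : R :=
  \prod_(s : 'I_B | (next s != None) && ((s == a) || prec next s a))
     (detval s)^-1.

(* diagonal entry g^{ii} of the contravariant metric at coordinate x_alpha^s *)
Definition gdiag (c : coordT nA) : R :=
  fA (tag c) * (P (tag c)).[x c] /
  \prod_(k < nA (tag c) | k != tagged c) (x c - x (cd k)).

Definition pred_on_path (a b : 'I_B) : option 'I_B :=
  [pick g | (next g == Some a) && ((g == b) || prec next g b)].

(* diagonal entry (at coordinate c) of S^alpha(t), as a polynomial in t *)
Definition Sdiag (a : 'I_B) (c : coordT nA) : {poly R} :=
  let b := tag c in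
  if b == a then
    (fA a)^-1 *: \prod_(k < nA b | k != tagged c) ('X - (x (cd k))%:P)
  else if prec next a b then
    match pred_on_path a b with
    | Some g => (fA a)^-1 *:
        ((detL a - ((detL a).[lam g])%:P) %/ ('X - (lam g)%:P))
    | None => 0
    end
  else 0.

(* K^alpha(t)^{cc} = g^{cc} * S^alpha(t)_{cc}  (all tensors are diagonal) *)
Definition Kdiag (a : 'I_B) (c : coordT nA) : {poly R} := gdiag c *: Sdiag a c.

(* I^alpha_{j+1}(p) = sum_c (K^alpha_{j+1})^{cc} p_c^2, where K^alpha_{j+1}
   is the coefficient of t^(n_alpha - (j+1)) *)
Definition Integral (p : coordT nA -> R) (col : coordT nA) : R :=
  let a := tag col in
  \sum_(c : coordT nA) (Kdiag a c)`_(nA a - (tagged col).+1) * p c ^+ 2.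

Definition Smat (row col : coordT nA) : R :=
  let b := tag row in let a := tag col in
  let xr := x row in
  if b == a then xr ^+ (nA a - (tagged col).+1) / (P b).[xr]
  else if next a == Some b then
    (if val (tagged col) == 0%N then ((P b).[xr] * (xr - lam a))^-1 else 0)
  else 0.

End Metric.

Definition admissible (R : numFieldType) (B : nat) (nA : 'I_B -> nat)
  (next : 'I_B -> option 'I_B) (lam : 'I_B -> R) (P : 'I_B -> {poly R}) : Prop :=
  [/\ is_forest next,
      (forall a, 0 < nA a)%N,
      (forall a, size (P a) <= (nA a).+2)%N &
   [/\
      ((1 < #|[set a | next a == None]|)%N ->
         forall a, next a = None -> (P a)`_(nA a).+1 = 0),
      (forall a b, next b = Some a ->
         (P a).[lam b] = 0 /\ (P b)`_(nA b).+1 = (P a)^`().[lam b]) &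
      (forall a b g, b != g -> next b = Some a -> next g = Some a ->
         lam b = lam g -> (('X - (lam b)%:P) ^+ 2 %| P a))]].

Definition in_domain (R : numFieldType) (B : nat) (nA : 'I_B -> nat)
  (next : 'I_B -> option 'I_B) (lam : 'I_B -> R) (P : 'I_B -> {poly R})
  (x : coordT nA -> R) : Prop :=
  [/\ (forall a (k l : 'I_(nA a)), k != l -> x (cd k) != x (cd l)),
      (forall s, detval next lam x s != 0) &
      (forall c : coordT nA, (P (tag c)).[x c] != 0)].

From HB Require Import structures.
From mathcomp Require Import all_boot all_order all_algebra ring.
Import Order.TTheory GRing.Theory Num.Theory.
Set Implicit Arguments. Unset Strict Implicit. Unset Printing Implicit Defensive.
Local Open Scope ring_scope.

(* The Staeckel identity  S I = P.
   All tensors involved are diagonal in the coordinates x_beta^i, so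
   I^alpha_j(p) = sum_c (K^alpha_j)^{cc} p_c^2, and  S I = P  for every momentum
   p follows from the matrix identity  sum_(alpha,j) S_{r,(alpha,j)} (K^alpha_j)^{cc}
   = delta_{rc}  (lemma [stackel_inverse]).  Fix the row r = x_beta^i.  By Horner's
   scheme the columns of block beta contribute K^beta(x_beta^i)^{cc} / P_beta(x_beta^i);
   a child alpha of beta contributes only through its column j = 1, which picks the
   leading coefficient of K^alpha(t)^{cc}; this is g^{cc}/f_alpha if alpha lies on the path
   from the block of c to beta, and 0 otherwise.  Three cases remain: c lies in block
   beta (evaluation of prod_{l<>k}(t - x_l) at x_beta^i gives delta_{rc}), the block of c
   lies strictly below beta (the child gamma on the path cancels Phi(x_beta^i), since
   f_gamma = f_beta / det(lambda_gamma - L_beta) and det(x_beta^i - L_beta) = 0), or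
   neither (both contributions vanish). *)

Section Forest.
Variables (B : nat) (next : 'I_B -> option 'I_B).

Local Notation anc s b := ((s == b) || prec next s b).

Lemma nextk_add m n b :
  nextk next (m + n) b = obind (nextk next m) (nextk next n b).
Proof.
elim: m => [|m IH] /=; first by case: (nextk next n b).
by rewrite IH; case: (nextk next n b).
Qed.

Hypothesis forest : is_forest next.

Lemma nextk_acyclic m v : (0 < m)%N -> nextk next m v != Some v.
Proof.
move=> m_gt0; apply/eqP => cyc.
have iter_cyc q : nextk next (q * m) v = Some v.
  by elim: q => [|q IH] //; rewrite mulSn nextk_add IH /= cyc.
have [k root_k] := forest v.
by move: (iter_cyc k); rewrite -(subnK (leq_pmulr k m_gt0)) nextk_add root_k.
Qed.

Lemma nextk_inj i j b u :
  nextk next i b = Some u -> nextk next j b = Some u -> i = j.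
Proof.
wlog le_ij : i j / (i <= j)%N.
  move=> hwlog Hi Hj; case/orP: (leq_total i j) => le.
  - exact: hwlog le Hi Hj.
  - by rewrite (hwlog _ _ le Hj Hi).
move=> Hi Hj; have cyc : nextk next (j - i) u = Some u.
  by rewrite -Hj -[in RHS](subnK le_ij) nextk_add Hi.
apply/eqP; rewrite eqn_leq le_ij /= leqNgt -subn_gt0.
by apply/negP => /(@nextk_acyclic _ u); rewrite cyc eqxx.
Qed.

(* A path visits distinct vertices, so it has fewer than B steps; this justifies
   the bounded quantifier in the definition of [prec]. *)
Lemma nextk_bound k b a : nextk next k b = Some a -> (k < B)%N.
Proof.
move=> Hk.
have defined (i : 'I_k.+1) : exists u, nextk next i b = Some u.
  case E: (nextk next i b) => [u|]; first by exists u.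
  by move: Hk; rewrite -(subnK (ltnSE (ltn_ord i))) nextk_add E.
pose vertex_at (i : 'I_k.+1) := odflt b (nextk next i b).
have vertex_inj : injective vertex_at.
  move=> i j; rewrite /vertex_at.
  have [u Hu] := defined i; have [w Hw] := defined j.
  rewrite Hu Hw /= => eq_uw; subst w; apply/val_inj; exact: nextk_inj Hu Hw.
by have := leq_card vertex_at vertex_inj; rewrite !card_ord.
Qed.

Lemma precP a b : reflect (exists k, nextk next k.+1 b = Some a) (prec next a b).
Proof.
apply: (iffP existsP) => [[k /eqP Hk] | [k Hk]]; first by exists k.
by exists (Ordinal (ltnW (nextk_bound Hk))); apply/eqP.
Qed.

Lemma ancP s b : reflect (exists k, nextk next k b = Some s) (anc s b).
Proof.
apply: (iffP orP) => [[/eqP -> | /precP [k Hk]] | [[|k] Hk]].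
- by exists 0%N.
- by exists k.+1.
- by left; case: Hk => ->.
- by right; apply/precP; exists k.
Qed.

Lemma prec_irrefl a : ~~ prec next a a.
Proof. by apply/precP => -[k]; apply/eqP/nextk_acyclic. Qed.

Lemma prec_child g a s : next g = Some a -> prec next s g = anc s a.
Proof.
move=> Hg; apply/precP/ancP => -[k Hk]; exists k.
- by move: Hk; rewrite -addn1 nextk_add /= Hg.
- by rewrite -addn1 nextk_add /= Hg.
Qed.

Lemma anc_child_prec g a b : next g = Some a -> anc g b -> prec next a b.
Proof. by move=> Hg /ancP [k Hk]; apply/precP; exists k; rewrite /= Hk. Qed.

Lemma child_not_anc g a : next g = Some a -> ~~ anc g a.
Proof.
move=> Hg; apply/negP => /(anc_child_prec Hg).
by rewrite (negbTE (prec_irrefl a)).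
Qed.

Lemma child_neq g a : next g = Some a -> g != a.
Proof. by move/child_not_anc; apply: contra => ->. Qed.

Lemma anc_unique g g' a b :
  next g = Some a -> next g' = Some a -> anc g b -> anc g' b -> g = g'.
Proof.
move=> Hg Hg' /ancP [i Hi] /ancP [j Hj].
have [eq_ij] : i.+1 = j.+1.
  by apply: (@nextk_inj _ _ b a); [rewrite /= Hi /= Hg | rewrite /= Hj /= Hg'].
by move: Hi; rewrite eq_ij Hj => -[].
Qed.

Lemma prec_child_exists a b : prec next a b -> exists2 g, next g = Some a & anc g b.
Proof.
case/precP => k /=; case E: (nextk next k b) => [g|] //= Hg.
by exists g => //; apply/ancP; exists k.
Qed.

Lemma pred_on_path_eq g a b :
  next g = Some a -> anc g b -> pred_on_path next a b = Some g.
Proof.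
move=> Hg Hgb; rewrite /pred_on_path; case: pickP => [g' /andP [/eqP Hg' Hg'b] | none].
  by rewrite (anc_unique Hg' Hg Hg'b Hgb).
by have := none g; rewrite Hg eqxx Hgb.
Qed.

Lemma pred_on_path_None a b : ~~ prec next a b -> pred_on_path next a b = None.
Proof.
rewrite /pred_on_path; case: pickP => // g /andP [/eqP Hg Hgb].
by rewrite (anc_child_prec Hg Hgb).
Qed.

Lemma big_pred_on_path (V : nmodType) a b (F : 'I_B -> V) :
  \sum_(g | (next g == Some a) && anc g b) F g =
  if pred_on_path next a b is Some g then F g else 0.
Proof.
case E: (pred_on_path next a b) => [g|].
- move: E; rewrite /pred_on_path; case: pickP => // g0 /andP [/eqP Hg Hgb] [<-].
  rewrite (big_pred1 g0) // => g'; apply/andP/eqP => [[/eqP Hg' Hg'b] | ->].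
    exact: anc_unique Hg' Hg Hg'b Hgb.
  by rewrite Hg eqxx.
- rewrite big_pred0 // => g; apply/negP => /andP [/eqP Hg Hgb].
  by rewrite (pred_on_path_eq Hg Hgb) in E.
Qed.

End Forest.

Lemma sum_sigT (V : nmodType) (I : finType) (J : I -> finType)
    (F : {i : I & J i} -> V) :
  \sum_(p : {i : I & J i}) F p = \sum_(i : I) \sum_(j : J i) F (Tagged J j).
Proof.
rewrite (sig_big_dep xpredT (fun _ _ => true) (fun i j => F (Tagged J j))) /=.
by apply: eq_bigr => -[i j].
Qed.

Section Polynomials.
Variable R : fieldType.

(* Horner evaluation with the coefficient of t^(n-j) paired with the j-th power,
   as in the rows of the Staeckel matrix. *)
Lemma horner_rev_sum n (q : {poly R}) (y : R) :
  (size q <= n)%N -> \sum_(j < n) y ^+ (n - j.+1) * q`_(n - j.+1) = q.[y].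
Proof.
move=> size_q; rewrite (horner_coef_wide y size_q) (reindex_inj rev_ord_inj) /=.
apply: eq_bigr => j _; rewrite mulrC subnS subKn //; exact: ltn_ord.
Qed.

Lemma size_prod_XsubC_pred (T : finType) (D : pred T) (h : T -> R) :
  size (\prod_(k | D k) ('X - (h k)%:P)) = #|D|.+1.
Proof.
rewrite -big_filter -(big_map h predT (fun y => 'X - y%:P)) size_prod_XsubC.
by rewrite size_map cardE /enum_mem size_filter.
Qed.

(* The difference quotient (p(t) - p(mu)) / (t - mu), which defines Phi. *)
Definition divXsubC (p : {poly R}) (mu : R) := (p - p.[mu]%:P) %/ ('X - mu%:P).

(* It is an exact quotient, mu being a root of p(t) - p(mu). *)
Lemma divXsubCK p mu : divXsubC p mu * ('X - mu%:P) = p - p.[mu]%:P.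
Proof. by apply: divpK; rewrite dvdp_XsubCl /root !hornerE subrr. Qed.

Lemma horner_divXsubC p mu y :
  y != mu -> (divXsubC p mu).[y] = (p.[y] - p.[mu]) / (y - mu).
Proof.
move=> y_neq; have := congr1 (horner^~ y) (divXsubCK p mu).
rewrite /= hornerM hornerXsubC !hornerE => <-.
by rewrite mulfK // subr_eq0.
Qed.

Lemma monic_divXsubC p mu : p \is monic -> (1 < size p)%N ->
  (divXsubC p mu \is monic) && (size (divXsubC p mu) == (size p).-1).
Proof.
move=> p_monic size_p.
have small_const : (size (- p.[mu]%:P) < size p)%N.
  by rewrite size_polyN; exact: leq_ltn_trans (size_polyC_leq1 _) size_p.
have q_neq0 : divXsubC p mu != 0.
  apply/eqP => q0; have := size_polyDl small_const.
  by rewrite -divXsubCK q0 mul0r size_poly0 => sp0; rewrite -sp0 in size_p.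
rewrite monicE -(lead_coef_Mmonic _ (monicXsubC mu)) divXsubCK.
rewrite lead_coefDl // (monicP p_monic) eqxx /=.
rewrite -[in X in _ == X](size_polyDl small_const) -divXsubCK.
by rewrite size_Mmonic ?monicXsubC // size_XsubC addn2.
Qed.

End Polynomials.

Section StackelInverse.
Variables (R : numFieldType) (B : nat) (nA : 'I_B -> nat)
  (next : 'I_B -> option 'I_B) (lam : 'I_B -> R) (P : 'I_B -> {poly R})
  (x : coordT nA -> R).

Local Notation anc s b := ((s == b) || prec next s b).
Local Notation f := (fA next lam x).
Local Notation metric := (gdiag next lam P x).
Local Notation S := (Smat next lam P x).
Local Notation K := (Kdiag next lam P x).

Hypothesis forest : is_forest next.
Hypothesis nA_pos : forall a, (0 < nA a)%N.
Hypothesis x_sep : forall a (k l : 'I_(nA a)), k != l -> x (cd k) != x (cd l).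
Hypothesis detval_neq0 : forall s, detval next lam x s != 0.
Hypothesis P_neq0 : forall c : coordT nA, (P (tag c)).[x c] != 0.

Lemma fA_next g a : next g = Some a -> f g = (detval next lam x g)^-1 * f a.
Proof.
move=> Hg; rewrite /fA (bigD1 g) /=; last by rewrite Hg eqxx.
congr (_ * _); apply: eq_bigl => s; rewrite (prec_child forest _ Hg).
case: (eqVneq s g) => [->|_] /=; last by rewrite andbT.
by rewrite andbF (negbTE (child_not_anc forest Hg)) andbF.
Qed.

Lemma fA_neq0 a : f a != 0.
Proof. by apply/prodf_neq0 => s _; rewrite invr_eq0. Qed.

Lemma detL_root a (i : 'I_(nA a)) : (detL x a).[x (cd i)] = 0.
Proof. by rewrite /detL horner_prod (bigD1 i) //= hornerXsubC subrr mul0r. Qed.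

Lemma coord_neq_lam a g (i : 'I_(nA a)) : next g = Some a -> x (cd i) != lam g.
Proof.
move=> Hg; apply: contraNneq (detval_neq0 g) => eq_xl.
by rewrite /detval Hg -eq_xl detL_root.
Qed.

(* Where S^a(t) is nonzero, its entry is f_a^{-1} times a monic polynomial of degree
   n_a - 1: a product of linear factors, or a difference quotient of det(t - L_a). *)
Lemma Sdiag_anc a c : anc a (tag c) ->
  exists2 q : {poly R}, (q \is monic) && (size q == nA a)
                      & Sdiag next lam x a c = (f a)^-1 *: q.
Proof.
case: c => b k /= Hanc; rewrite /Sdiag /= eq_sym.
case: (eqVneq a b) Hanc => [eq_ab _|_ /= Hp].
  subst a; exists (\prod_(l < nA b | l != k) ('X - (x (cd l))%:P)) => //.
  by rewrite monic_prod_XsubC size_prod_XsubC_pred cardC1 card_ord prednK ?eqxx.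
have [g Hg Hgb] := prec_child_exists forest Hp.
rewrite Hp (pred_on_path_eq forest Hg Hgb).
exists (divXsubC (detL x a) (lam g)) => //.
have det_monic : detL x a \is monic by apply: monic_prod_XsubC.
have size_det : size (detL x a) = (nA a).+1.
  by rewrite size_prod_XsubC_pred card_ord.
by have := monic_divXsubC (lam g) det_monic; rewrite size_det ltnS; apply; exact: nA_pos.
Qed.

Lemma Kdiag_not_anc a c : ~~ anc a (tag c) -> K a c = 0.
Proof.
case: c => b k; rewrite /Kdiag /Sdiag /= negb_or eq_sym.
by case/andP => /negbTE -> /negbTE ->; rewrite scaler0.
Qed.

Lemma Kdiag_size a c : (size (K a c) <= nA a)%N.
Proof.
have [/Sdiag_anc [q /andP [_ /eqP size_q] Sq] | /Kdiag_not_anc ->] :=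
  boolP (anc a (tag c)); last by rewrite size_poly0.
by rewrite /Kdiag Sq scalerA -size_q size_scale_leq.
Qed.

Lemma Kdiag_lead a c :
  (K a c)`_(nA a - 1) = if anc a (tag c) then metric c / f a else 0.
Proof.
have [/Sdiag_anc [q /andP [q_monic /eqP size_q] Sq] | /Kdiag_not_anc ->] :=
  boolP (anc a (tag c)); last by rewrite coef0.
by rewrite /Kdiag Sq !coefZ subn1 -size_q -lead_coefE (monicP q_monic) mulr1.
Qed.

Lemma Kdiag_eval_same a (k i : 'I_(nA a)) :
  (K a (cd k)).[x (cd i)] = (k == i)%:R * (P a).[x (cd i)].
Proof.
have eval_prod : (\prod_(l < nA a | l != k) ('X - (x (cd l))%:P)).[x (cd i)] =
                  \prod_(l < nA a | l != k) (x (cd i) - x (cd l)).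
  by rewrite horner_prod; apply: eq_bigr => l _; rewrite hornerXsubC.
rewrite /Kdiag /Sdiag /gdiag /= eqxx !hornerZ eval_prod.
have [-> | neq_ki] := eqVneq k i.
  have prod_neq0 : \prod_(l < nA a | l != i) (x (cd i) - x (cd l)) != 0.
    by apply/prodf_neq0 => l l_neq; rewrite subr_eq0 x_sep // eq_sym.
  by rewrite mulr1n mul1r; field; rewrite prod_neq0 fA_neq0.
have prod_eq0 : \prod_(l < nA a | l != k) (x (cd i) - x (cd l)) = 0.
  by rewrite (bigD1 i) 1?eq_sym //= subrr mul0r.
by rewrite prod_eq0 !mulr0 mulr0n mul0r.
Qed.

Lemma Kdiag_eval_desc g a c (i : 'I_(nA a)) :
  next g = Some a -> anc g (tag c) ->
  (K a c).[x (cd i)] = - metric c / (f g * (x (cd i) - lam g)).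
Proof.
move=> Hg Hgc; have a_prec := anc_child_prec forest Hg Hgc.
have tag_neq : (tag c == a) = false.
  by apply: contraNF (child_not_anc forest Hg) => /eqP <-.
rewrite /Kdiag /Sdiag tag_neq a_prec (pred_on_path_eq forest Hg Hgc) !hornerZ.
rewrite horner_divXsubC ?coord_neq_lam // detL_root (fA_next Hg).
have det_neq0 : (detL x a).[lam g] != 0 by have := detval_neq0 g; rewrite /detval Hg.
have x_neq : x (cd i) - lam g != 0 by rewrite subr_eq0 coord_neq_lam.
by rewrite /detval Hg; field; rewrite det_neq0 x_neq fA_neq0.
Qed.

(* Row x_b^i against the columns of its own block: Horner's scheme. *)
Lemma row_block_same a (i : 'I_(nA a)) c :
  \sum_(j < nA a) S (cd i) (cd j) * (K a c)`_(nA a - j.+1) =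
  (K a c).[x (cd i)] / (P a).[x (cd i)].
Proof.
rewrite -(horner_rev_sum _ (Kdiag_size a c)) mulr_suml; apply: eq_bigr => j _.
by rewrite /Smat /= eqxx mulrAC.
Qed.

Lemma row_block_other a b (i : 'I_(nA b)) c : a != b ->
  \sum_(j < nA a) S (cd i) (cd j) * (K a c)`_(nA a - j.+1) =
  if next a == Some b then (K a c)`_(nA a - 1) / ((P b).[x (cd i)] * (x (cd i) - lam a))
  else 0.
Proof.
move=> neq_ab; have neq_ba : (b == a) = false by rewrite eq_sym (negbTE neq_ab).
rewrite /Smat /= neq_ba; case: eqP => _; last by rewrite big1 // => j _; rewrite mul0r.
rewrite (bigD1 (Ordinal (nA_pos a))) //= big1 ?addr0 1?mulrC // => j j_neq0.
by rewrite ifN ?mul0r.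
Qed.

Lemma Smat_times_K b (i : 'I_(nA b)) c :
  \sum_(col : coordT nA) S (cd i) col * (K (tag col) c)`_(nA (tag col) - (tagged col).+1) =
  (K b c).[x (cd i)] / (P b).[x (cd i)] +
  \sum_(a | next a == Some b) (K a c)`_(nA a - 1) / ((P b).[x (cd i)] * (x (cd i) - lam a)).
Proof.
rewrite sum_sigT (bigD1 b) //= row_block_same; congr (_ + _).
rewrite (eq_bigr _ (fun a => row_block_other i c)) [RHS]big_mkcond [LHS]big_mkcond.
apply: eq_bigr => a _; case: (eqVneq (next a) (Some b)) => [Ha|_].
  by rewrite (child_neq forest Ha).
by case: (a != b).
Qed.

Lemma children_contribution b c (w : 'I_B -> R) :
  \sum_(a | next a == Some b) (K a c)`_(nA a - 1) * w a =
  if pred_on_path next b (tag c) is Some g then metric c / f g * w g else 0.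
Proof.
rewrite -(big_pred_on_path forest) big_mkcondr /=; apply: eq_bigr => a _.
by rewrite Kdiag_lead; case: ifP; rewrite ?mul0r.
Qed.

Lemma stackel_inverse b (i : 'I_(nA b)) c :
  \sum_(col : coordT nA) S (cd i) col * (K (tag col) c)`_(nA (tag col) - (tagged col).+1) =
  (c == cd i)%:R.
Proof.
rewrite Smat_times_K children_contribution.
have [tag_c | tag_neq] := eqVneq (tag c) b.
  case: c tag_c => a k /= eq_ab; subst a.
  rewrite pred_on_path_None ?prec_irrefl // addr0 Kdiag_eval_same eq_Tagged /=.
  by rewrite mulfK // (P_neq0 (cd i)).
have -> : (c == cd i) = false by apply: contraNF tag_neq => /eqP ->.
rewrite mulr0n.
have [/(prec_child_exists forest) [g Hg Hgc] | not_prec] := boolP (prec next b (tag c)).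
  rewrite (pred_on_path_eq forest Hg Hgc) (Kdiag_eval_desc _ Hg Hgc).
  have x_neq : x (cd i) - lam g != 0 by rewrite subr_eq0 coord_neq_lam.
  by field; rewrite (P_neq0 (cd i)) fA_neq0 x_neq.
rewrite pred_on_path_None // Kdiag_not_anc ?horner0 ?mul0r ?addr0 //.
by rewrite negb_or not_prec eq_sym tag_neq.
Qed.

End StackelInverse.

(* Theorem 1.4: each I^alpha_j is the sum of the (K^alpha_j)^{cc} p_c^2, so [stackel_inverse]
   turns S I into P after exchanging the two sums. *)
Theorem theorem1p4 (R : numFieldType) (B : nat) (nA : 'I_B -> nat)
  (next : 'I_B -> option 'I_B) (lam : 'I_B -> R) (P : 'I_B -> {poly R}) :
  (0 < B)%N ->
  admissible nA next lam P ->
  forall x : coordT nA -> R, in_domain next lam P x ->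
  forall (p : coordT nA -> R) (row : coordT nA),
    \sum_(col : coordT nA) Smat next lam P x row col * Integral next lam P x p col
    = p row ^+ 2.
Proof.
move=> _ [forest nA_pos _ _] x [x_sep detval_neq0 P_neq0] p [b i].
have SK := stackel_inverse forest nA_pos x_sep detval_neq0 P_neq0 i.
rewrite /Integral; under eq_bigr do rewrite mulr_sumr.
rewrite exchange_big /=.
transitivity (\sum_(c : coordT nA) (c == cd i)%:R * p c ^+ 2).
  apply: eq_bigr => c _; rewrite -SK mulr_suml.
  by apply: eq_bigr => col _; rewrite mulrA.
rewrite (bigD1 (cd i)) //= eqxx mul1r big1 ?addr0 // => c /negbTE ->.
exact: mul0r.
Qed.
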